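(* Let $G=\{1,\dots,n\}$ be a set of generating units with marginal costs $C_1<\dots<C_n$, capacities $\overline P_g\ge 0$, up/down balancing costs $C^{\mathrm u}_g, C^{\mathrm d}_g\in\mathbb{R}$ and balancing limits $R^{\mathrm u}_g,R^{\mathrm d}_g\ge 0$. Let $B$ be a finite set of nodes, $\Lambda$ a finite set of lines with origin $o(l)\in B$, end $e(l)\in B$ and capacity $\overline F_l\ge0$, $G(b)\subseteq G$ the units at node $b$ (the sets $G(b)$ partitioning $G$), and $D(b)$ the loads at node $b$. Let data $\{(\mathbf x_i,(L_{di})_{d})\}_{i=1}^N$ be given with $\mathbf x_i\in\mathbb{R}^p$ and $L_{di}\in\mathbb{R}$. For each $i$ and $\widehat L\in\mathbb R$ define the realized-cost set $T_i(p)$ as the set of $(r^{\mathrm u},r^{\mathrm d},f)\in\mathbb R^n_{\ge0}\times\mathbb R^n_{\ge0}\times\mathbb R^{\Lambda}$ with $0\le p_g+r^{\mathrm u}_g-r^{\mathrm d}_g\le\overline P_g$, $r^{\mathrm u}_g\le R^{\mathrm u}_g$, $r^{\mathrm d}_g\le R^{\mathrm d}_g$ for all $g$, $\sum_{g\in G(b)}(p_g+r^{\mathrm u}_g-r^{\mathrm d}_g)=\sum_{d\in D(b)}L_{di}+\sum_{l:o(l)=b}f_l-\sum_{l:e(l)=b}f_l$ for all $b\in B$, and $|f_l|\le\overline F_l$ for all $l$. (Bilevel problem) Minimize over $\mathbf q\in\mathbb R^p$ and $(p_{\cdot i},r^{\mathrm u}_{\cdot i},r^{\mathrm d}_{\cdot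 i},f_{\cdot i})_{i=1}^N$ the objective $\frac1N\sum_{i=1}^N\sum_{g}(C_gp_{gi}+C^{\mathrm u}_gr^{\mathrm u}_{gi}-C^{\mathrm d}_gr^{\mathrm d}_{gi})$ subject to $(r^{\mathrm u}_{\cdot i},r^{\mathrm d}_{\cdot i},f_{\cdot i})\in T_i(p_{\cdot i})$ and $p_{\cdot i}\in\arg\min\{\sum_gC_gp_g:\sum_gp_g=\mathbf q^\top\mathbf x_i,\ 0\le p_g\le\overline P_g\ \forall g\}$ for all $i$. (Single-level MILP) Minimize the same objective over the same variables together with $u_{gi}\in\{0,1\}$, subject to $(r^{\mathrm u}_{\cdot i},r^{\mathrm d}_{\cdot i},f_{\cdot i})\in T_i(p_{\cdot i})$, $\sum_g p_{gi}=\mathbf q^\top\mathbf x_i$, $u_{1i}\overline P_1\le p_{1i}\le\overline P_1$, $u_{gi}\overline P_g\le p_{gi}\le u_{(g-1)i}\overline P_g$ and $u_{gi}\le u_{(g-1)i}$ for $g\ge2$, for all $i$. Then the feasible set of the bilevel problem equals the projection of the feasible set of the MILP onto the variables $(\mathbf q,p,r^{\mathrm u},r^{\mathrm d},f)$; consequently both problems have the same optimal value, and a vector $\mathbf q$ (together with the remaining variables) is optimal for the bilevel problem if and only if it is (the projection of) an optimal solution of the MILP.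
   Context: This is the training problem for an affine ''prescription'' $\widehat L=\mathbf q^\top\mathbf x$ of total system net demand used in a two-stage power scheduling: the forward stage dispatches units by cost-merit order to meet $\widehat L$, and the real-time stage adjusts production by up-regulation $r^{\mathrm u}$ and down-regulation $r^{\mathrm d}$ to meet the realized nodal net loads $L_{di}$ over a transport (pipeline) network with line flows $f_l$. Strictly ordered marginal costs $C_1<\dots<C_n$ are assumed so that the forward dispatch problem has a unique optimal solution whenever feasible. *)

From HB Require Import structures.
From mathcomp Require Import all_boot all_order all_algebra.
From mathcomp Require Import classical_sets reals constructive_ereal ereal.
Set Implicit Arguments. Unset Strict Implicit. Unset Printing Implicit Defensive.
Import Order.TTheory GRing.Theory Num.Theory.
Local Open Scope ring_scope.
Local Open Scope classical_set_scope.

Section Model.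
Variable R : realType.
(* n units 'I_n (unit g has index val g; unit "1" of the paper is index 0),
   N data points 'I_N, feature dimension p. *)
Variables (n N p : nat).
Variables (B Lam D : finType).
Variables (C Cu Cd Pbar Ru Rd : 'I_n -> R).
Variables (o e : Lam -> B) (Fbar : Lam -> R).
(* node of each unit (G(b) = [g | loc g == b]) and of each load (D(b)) *)
Variables (loc : 'I_n -> B) (dloc : D -> B).
Variables (x : 'I_N -> 'I_p -> R) (L : 'I_N -> D -> R).

Definition prescription (q : 'I_p -> R) (i : 'I_N) : R := \sum_(k < p) q k * x i k.

Definition inT (i : 'I_N) (pv : 'I_n -> R) (ru rd : 'I_n -> R) (f : Lam -> R) : Prop :=
  (forall g : 'I_n, [/\ 0 <= ru g, 0 <= rd g,
       0 <= pv g + ru g - rd g <= Pbar g, ru g <= Ru g & rd g <= Rd g]) /\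
  (forall b : B,
     \sum_(g < n | loc g == b) (pv g + ru g - rd g) =
     \sum_(d | dloc d == b) L i d + \sum_(l | o l == b) f l - \sum_(l | e l == b) f l) /\
  (forall l : Lam, `|f l| <= Fbar l).

Definition dispatch_feasible (Lhat : R) (pv : 'I_n -> R) : Prop :=
  \sum_(g < n) pv g = Lhat /\ (forall g : 'I_n, 0 <= pv g <= Pbar g).

Definition dispatch_argmin (Lhat : R) (pv : 'I_n -> R) : Prop :=
  dispatch_feasible Lhat pv /\
  (forall pv' : 'I_n -> R, dispatch_feasible Lhat pv' ->
     \sum_(g < n) C g * pv g <= \sum_(g < n) C g * pv' g).

Definition objective (P RU RD : 'I_N -> 'I_n -> R) : R :=
  (N%:R)^-1 * \sum_(i < N) \sum_(g < n) (C g * P i g + Cu g * RU i g - Cd g * RD i g).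

Definition bilevel_feasible (q : 'I_p -> R) (P RU RD : 'I_N -> 'I_n -> R)
    (F : 'I_N -> Lam -> R) : Prop :=
  forall i : 'I_N, inT i (P i) (RU i) (RD i) (F i) /\ dispatch_argmin (prescription q i) (P i).

Definition milp_feasible (q : 'I_p -> R) (P RU RD : 'I_N -> 'I_n -> R)
    (F : 'I_N -> Lam -> R) (U : 'I_N -> 'I_n -> R) : Prop :=
  forall i : 'I_N,
    [/\ inT i (P i) (RU i) (RD i) (F i),
        \sum_(g < n) P i g = prescription q i,
        (forall g : 'I_n, U i g = 0 \/ U i g = 1),
        (forall g : 'I_n, val g = 0%N -> U i g * Pbar g <= P i g <= Pbar g) &
        (forall g h : 'I_n, val h = (val g).+1 ->
           U i h * Pbar h <= P i h <= U i g * Pbar h /\ U i h <= U i g)].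

Definition bilevel_optimal q P RU RD F : Prop :=
  bilevel_feasible q P RU RD F /\
  (forall q' P' RU' RD' F', bilevel_feasible q' P' RU' RD' F' ->
     objective P RU RD <= objective P' RU' RD').

Definition milp_optimal q P RU RD F U : Prop :=
  milp_feasible q P RU RD F U /\
  (forall q' P' RU' RD' F' U', milp_feasible q' P' RU' RD' F' U' ->
     objective P RU RD <= objective P' RU' RD').

(* optimal values (infima, in the extended reals; +oo if infeasible) *)
Definition bilevel_value : \bar R :=
  ereal_inf [set v | exists q P RU RD F,
    bilevel_feasible q P RU RD F /\ v = (objective P RU RD)%:E].

Definition milp_value : \bar R :=
  ereal_inf [set v | exists q P RU RD F U,
    milp_feasible q P RU RD F U /\ v = (objective P RU RD)%:E].

End Model.

From HB Require Import structures.
From mathcomp Require Import all_boot all_order all_algebra.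
From mathcomp Require Import classical_sets reals constructive_ereal ereal.
From mathcomp Require Import lra.
Set Implicit Arguments. Unset Strict Implicit. Unset Printing Implicit Defensive.
Import Order.TTheory GRing.Theory Num.Theory.
Local Open Scope ring_scope.

(* The bilevel scheduling problem and its single-level MILP differ only in how
   the forward dispatch of scenario i is constrained: the bilevel problem asks
   for an optimal solution of the economic dispatch with demand q^T x_i, the
   MILP asks for a dispatch with that total together with binary indicators
   u_g encoding "units 1..g are all at capacity".  With strictly increasing
   marginal costs both describe the same dispatches, namely those in MERIT
   ORDER: a unit produces only if every cheaper unit is at capacity.
   - Section MeritOrderDispatch: a feasible dispatch is optimal iff it is in
     merit order (an exchange argument in each direction).
   - Section CommitmentIndicators: a bounded dispatch in merit order satisfies
     the MILP linking constraints with u_g = [units 1..g are full], and any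
     dispatch satisfying those constraints with some binary u is bounded and
     in merit order.
   - Section Reformulation: hence the bilevel feasible set is the projection
     of the MILP feasible set; equality of optimal values and correspondence
     of optimal solutions follow since both objectives ignore u. *)

Section MeritOrderDispatch.
Variables (R : realType) (n : nat) (C Pbar : 'I_n -> R).
Hypothesis increasing_cost : forall g h : 'I_n, (val g < val h)%N -> C g < C h.

Definition merit_order (pv : 'I_n -> R) : Prop :=
  forall j h : 'I_n, (val j < val h)%N -> pv j < Pbar j -> pv h = 0.

Lemma sum_indicator (F : 'I_n -> R) (j : 'I_n) :
  \sum_(g < n) F g * (g == j)%:R = F j.
Proof.
rewrite (bigD1 j) //= eqxx mulr1 big1 ?addr0 // => g /negbTE ->.
by rewrite mulr0.
Qed.

(* Key estimate for sufficiency: let k be the cheapest unit not at capacity in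
   a merit-order dispatch pv.  For any other bounded dispatch pv', weighting
   the difference pv - pv' by C g instead of C k can only decrease it, since
   pv g - pv' g >= 0 below k and <= 0 above k. *)
Lemma merit_order_pointwise_le (pv pv' : 'I_n -> R) (k g : 'I_n) :
  merit_order pv ->
  (forall g, 0 <= pv g <= Pbar g) -> (forall g, 0 <= pv' g <= Pbar g) ->
  pv k < Pbar k -> (forall j, pv j < Pbar j -> (val k <= val j)%N) ->
  C g * (pv g - pv' g) <= C k * (pv g - pv' g).
Proof.
move=> Hm b b' Hk Hmin.
have /andP [b1 b2] := b g; have /andP [b1' b2'] := b' g.
case: (ltngtP (val g) (val k)) => Hgk.
- have Cle : C g <= C k by apply/ltW/increasing_cost.
  have full : pv g = Pbar g.
    apply/eqP; rewrite eq_le b2 /= leNgt; apply/negP => /Hmin.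
    by rewrite leqNgt Hgk.
  rewrite full; nra.
- have Cle : C k <= C g by apply/ltW/increasing_cost.
  rewrite (Hm k g Hgk Hk); nra.
- by have -> : g = k by apply: val_inj.
Qed.

(* Since the
   differences pv - pv' sum to zero, the pointwise estimate bounds the cost
   difference by C k * 0; if every unit is full, pv' = pv. *)
Lemma merit_order_argmin (Lhat : R) (pv : 'I_n -> R) :
  dispatch_feasible Pbar Lhat pv -> merit_order pv -> dispatch_argmin C Pbar Lhat pv.
Proof.
move=> [s b] Hm; split=> // pv' [s' b'].
have sum_diff0 : \sum_(g < n) (pv g - pv' g) = 0 by rewrite sumrB s s' subrr.
rewrite -subr_le0 -sumrB; under eq_bigr do rewrite -mulrBr.
case: (boolP [exists j, pv j < Pbar j]) => [/existsP [j0 Hj0]|/existsPn full].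
- have [k Hk Hmin] := @arg_minnP _ j0 (fun j => pv j < Pbar j) (fun j => val j) Hj0.
  apply: le_trans (_ : \sum_(g < n) C k * (pv g - pv' g) <= 0).
    by apply: ler_sum => g _; exact: merit_order_pointwise_le.
  by rewrite -mulr_sumr sum_diff0 mulr0.
- have diff_ge0 g : 0 <= pv g - pv' g.
    rewrite subr_ge0; apply: le_trans (andP (b' g)).2 _.
    by rewrite leNgt full.
  have diff0 := psumr_eq0P (fun g _ => diff_ge0 g) sum_diff0.
  by rewrite big1 // => g _; rewrite diff0 // mulr0.
Qed.

Definition shift (pv : 'I_n -> R) (j h : 'I_n) (eps : R) : 'I_n -> R :=
  fun g => pv g + eps * (g == j)%:R - eps * (g == h)%:R.

Lemma shift_feasible (Lhat : R) (pv : 'I_n -> R) (j h : 'I_n) (eps : R) :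
  dispatch_feasible Pbar Lhat pv -> h != j ->
  0 <= eps -> eps <= Pbar j - pv j -> eps <= pv h ->
  dispatch_feasible Pbar Lhat (shift pv j h eps).
Proof.
move=> [s b] hj e0 e1 e2; split.
  rewrite /shift sumrB big_split /= s.
  by rewrite (sum_indicator (fun=> eps)) (sum_indicator (fun=> eps)) addrK.
move=> g; rewrite /shift /=.
have [->|gj] := eqVneq g j.
  rewrite eq_sym (negbTE hj) mulr1 mulr0 subr0.
  by have /andP [b1 b2] := b j; apply/andP; split; lra.
rewrite mulr0 addr0.
have [->|gh] := eqVneq g h; last by rewrite mulr0 subr0 b.
by rewrite mulr1; have /andP [b1 b2] := b h; apply/andP; split; lra.
Qed.

Lemma shift_cost (pv : 'I_n -> R) (j h : 'I_n) (eps : R) :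
  \sum_(g < n) C g * shift pv j h eps g =
  \sum_(g < n) C g * pv g + (C j - C h) * eps.
Proof.
rewrite (eq_bigr (fun g => C g * pv g + (C g * eps) * (g == j)%:R
                             - (C g * eps) * (g == h)%:R)); last first.
  by move=> g _; rewrite /shift mulrBr mulrDr !mulrA.
rewrite sumrB big_split /= !(sum_indicator (fun g => C g * eps)).
by rewrite mulrBl addrA.
Qed.

(* Necessity: in an optimal dispatch, if j is not full and a more expensive h
   produced, shifting min (Pbar j - pv j, pv h) from h to j would strictly
   lower the cost. *)
Lemma argmin_merit_order (Lhat : R) (pv : 'I_n -> R) :
  dispatch_argmin C Pbar Lhat pv -> merit_order pv.
Proof.
move=> [feas opt] j h jh Hj; have [_ b] := feas; apply/eqP.
rewrite eq_le (andP (b h)).1 andbT leNgt; apply/negP => Hh.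
pose eps := Num.min (Pbar j - pv j) (pv h).
have e0 : 0 < eps by rewrite lt_min subr_gt0 Hj Hh.
have hj : h != j by apply/eqP => E; move: jh; rewrite E ltnn.
have e1 : eps <= Pbar j - pv j by rewrite ge_min lexx.
have e2 : eps <= pv h by rewrite ge_min lexx orbT.
have := opt _ (shift_feasible feas hj (ltW e0) e1 e2).
rewrite shift_cost lerDl pmulr_lge0 // subr_ge0 leNgt.
by rewrite increasing_cost.
Qed.

End MeritOrderDispatch.

Section CommitmentIndicators.
Variables (R : realType) (n : nat) (Pbar : 'I_n -> R).
Hypothesis Pbar_ge0 : forall g, 0 <= Pbar g.

(* The MILP linking constraints between a dispatch pv and indicators u
   (indices are shifted: unit 0 here is unit 1 of the paper). *)
Definition commitment_constraints (pv u : 'I_n -> R) : Prop :=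
  [/\ forall g, u g = 0 \/ u g = 1,
      forall g : 'I_n, val g = 0%N -> u g * Pbar g <= pv g <= Pbar g &
      forall g h : 'I_n, val h = (val g).+1 ->
        u h * Pbar h <= pv h <= u g * Pbar h /\ u h <= u g].

Definition commitment (pv : 'I_n -> R) (g : 'I_n) : R :=
  if [forall k : 'I_n, (val k <= val g)%N ==> (pv k == Pbar k)] then 1 else 0.

(* A bounded merit-order dispatch satisfies the linking constraints with the
   canonical indicator: if u_h = 0, some unit up to h is not full, so by merit
   order h produces nothing unless that unit is h itself. *)
Lemma merit_order_commitment (pv : 'I_n -> R) :
  (forall g, 0 <= pv g <= Pbar g) -> merit_order Pbar pv ->
  commitment_constraints pv (commitment pv).
Proof.
move=> b Hm.
have lower g : commitment pv g * Pbar g <= pv g.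
  rewrite /commitment; case: ifP => [/forallP full|_]; last first.
    by rewrite mul0r (andP (b g)).1.
  by rewrite mul1r; move/implyP: (full g) => /(_ (leqnn _)) /eqP ->.
split.
- by move=> g; rewrite /commitment; case: ifP; auto.
- by move=> g _; rewrite lower (andP (b g)).2.
move=> g h hg; split.
  rewrite lower /= /commitment; case: ifP => [_|/negbT].
    by rewrite mul1r (andP (b h)).2.
  rewrite negb_forall => /existsP [k]; rewrite negb_imply => /andP [kg kne].
  have kl : pv k < Pbar k by rewrite lt_neqAle kne (andP (b k)).2.
  by rewrite (Hm k h _ kl) ?mul0r // hg ltnS.
rewrite /commitment; case: ifP => [/forallP full|_]; last first.
  by case: ifP => _; rewrite ?ler01.
rewrite ifT //; apply/forallP => k; apply/implyP => kg; apply: (implyP (full k)).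
by rewrite hg leqW.
Qed.

Lemma ord_predecessor (h : 'I_n) : (0 < val h)%N -> exists g : 'I_n, val h = (val g).+1.
Proof.
move=> h_gt0; have lt : ((val h).-1 < n)%N := leq_ltn_trans (leq_pred _) (ltn_ord h).
by exists (Ordinal lt); rewrite /= prednK.
Qed.

Section Constraints.
Variables (pv u : 'I_n -> R).
Hypothesis cc : commitment_constraints pv u.

Lemma commitment_lower (g : 'I_n) : u g * Pbar g <= pv g.
Proof.
have [_ first step] := cc; case: (posnP (val g)) => [g0|/ord_predecessor [g' E]].
  by have /andP [] := first g g0.
by have [/andP []] := step g' g E.
Qed.

Lemma commitment_bounds (g : 'I_n) : 0 <= pv g <= Pbar g.
Proof.
have [bin first step] := cc.
have scaled_le (k : 'I_n) : u k * Pbar g <= Pbar g.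
  by case: (bin k) => ->; rewrite ?mul0r ?mul1r.
have scaled_ge0 : 0 <= u g * Pbar g.
  by case: (bin g) => ->; rewrite ?mul0r ?mul1r.
rewrite (le_trans scaled_ge0 (commitment_lower g)) /=.
case: (posnP (val g)) => [g0|/ord_predecessor [g' E]].
  by have /andP [] := first g g0.
have [/andP [_ up] _] := step g' g E; exact: le_trans up (scaled_le g').
Qed.

Lemma commitment_off_after (j m : 'I_n) : u j = 0 -> (val j <= val m)%N -> u m = 0.
Proof.
have [bin _ step] := cc; move=> uj; move Em: (val m) => k.
elim: k m Em => [|k IH] m Em jm; have [<- //|neq] := eqVneq j m.
  have : (val j < val m)%N by rewrite ltn_neqAle val_eqE neq Em.
  by rewrite Em.
have [g Eg] := ord_predecessor (h := m) (leq_trans (ltn0Sn k) (eq_leq (esym Em))).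
have Egk : val g = k by apply/eqP; rewrite -eqSS -Eg Em.
have jg : (val j <= k)%N.
  by rewrite -ltnS -Em ltn_neqAle val_eqE neq Em.
have [_ le_ug] := step g m Eg.
rewrite (IH g Egk jg) in le_ug.
by case: (bin m) le_ug => -> //; rewrite ler10.
Qed.

(* The linking constraints force merit order: a unit j below capacity has
   u_j = 0, so every later unit h has u_(h-1) = 0 and hence pv h <= 0. *)
Lemma commitment_merit_order : merit_order Pbar pv.
Proof.
have [bin _ step] := cc; move=> j h jh Hj.
have uj : u j = 0.
  case: (bin j) => // uj; have := commitment_lower j.
  by rewrite uj mul1r leNgt Hj.
have [g Eg] := ord_predecessor (leq_ltn_trans (leq0n _) jh).
have [/andP [_ up] _] := step g h Eg.
rewrite (commitment_off_after uj) ?mul0r in up; last by rewrite -ltnS -Eg.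
by apply/eqP; rewrite eq_le up (andP (commitment_bounds h)).1.
Qed.

End Constraints.
End CommitmentIndicators.

Section Reformulation.
Variables (R : realType) (n N p : nat) (B Lam D : finType).
Variables (C Cu Cd Pbar Ru Rd : 'I_n -> R) (o e : Lam -> B) (Fbar : Lam -> R).
Variables (loc : 'I_n -> B) (dloc : D -> B).
Variables (x : 'I_N -> 'I_p -> R) (L : 'I_N -> D -> R).
Hypothesis increasing_cost : forall g h : 'I_n, (val g < val h)%N -> C g < C h.
Hypothesis Pbar_ge0 : forall g, 0 <= Pbar g.

Lemma argmin_commitment (Lhat : R) (pv : 'I_n -> R) :
  dispatch_argmin C Pbar Lhat pv -> commitment_constraints Pbar pv (commitment Pbar pv).
Proof.
move=> opt; have [[_ b] _] := opt.
exact/merit_order_commitment/(argmin_merit_order increasing_cost opt).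
Qed.

Lemma commitment_argmin (Lhat : R) (pv u : 'I_n -> R) :
  \sum_(g < n) pv g = Lhat -> commitment_constraints Pbar pv u ->
  dispatch_argmin C Pbar Lhat pv.
Proof.
move=> s cc; apply: merit_order_argmin => //; last exact: commitment_merit_order cc.
by split=> // g; exact: commitment_bounds cc g.
Qed.

Lemma bilevel_milp_feasible_iff q P RU RD F :
  bilevel_feasible C Pbar Ru Rd o e Fbar loc dloc x L q P RU RD F <->
  exists U, milp_feasible Pbar Ru Rd o e Fbar loc dloc x L q P RU RD F U.
Proof.
split=> [feas | [U milp] i].
  exists (fun i => commitment Pbar (P i)) => i; have [T opt] := feas i.
  have [[s _] _] := opt; have [bin first step] := argmin_commitment opt.
  by split.
have [T s bin first step] := milp i; split=> //.
by apply: (commitment_argmin s (u := U i)); split.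
Qed.

(* Both problems minimize the same objective over the same projected set. *)
Lemma bilevel_milp_value_eq :
  bilevel_value C Cu Cd Pbar Ru Rd o e Fbar loc dloc x L =
  milp_value C Cu Cd Pbar Ru Rd o e Fbar loc dloc x L.
Proof.
rewrite /bilevel_value /milp_value; congr ereal_inf.
apply/seteqP; split=> v /=.
  move=> [q [P [RU [RD [F [/bilevel_milp_feasible_iff [U milp] ->]]]]]].
  by exists q, P, RU, RD, F, U.
move=> [q [P [RU [RD [F [U [milp ->]]]]]]].
by exists q, P, RU, RD, F; split=> //; apply/bilevel_milp_feasible_iff; exists U.
Qed.

Lemma bilevel_milp_optimal_iff q P RU RD F :
  bilevel_optimal C Cu Cd Pbar Ru Rd o e Fbar loc dloc x L q P RU RD F <->
  exists U, milp_optimal C Cu Cd Pbar Ru Rd o e Fbar loc dloc x L q P RU RD F U.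
Proof.
split=> [[/bilevel_milp_feasible_iff [U milp] best] | [U [milp best]]].
  exists U; split=> // q' P' RU' RD' F' U' milp'.
  by apply: best; apply/bilevel_milp_feasible_iff; exists U'.
split=> [|q' P' RU' RD' F' /bilevel_milp_feasible_iff [U' milp']].
  by apply/bilevel_milp_feasible_iff; exists U.
exact: best milp'.
Qed.

End Reformulation.

Theorem mainTheorem2 (R : realType) (n N p : nat) (B Lam D : finType)
  (C Cu Cd Pbar Ru Rd : 'I_n -> R) (o e : Lam -> B) (Fbar : Lam -> R)
  (loc : 'I_n -> B) (dloc : D -> B)
  (x : 'I_N -> 'I_p -> R) (L : 'I_N -> D -> R) :
  (forall g h : 'I_n, (val g < val h)%N -> C g < C h) ->
  (forall g, 0 <= Pbar g) -> (forall g, 0 <= Ru g) -> (forall g, 0 <= Rd g) ->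
  (forall l, 0 <= Fbar l) ->
  (forall q P RU RD F,
     bilevel_feasible C Pbar Ru Rd o e Fbar loc dloc x L q P RU RD F <->
     exists U, milp_feasible Pbar Ru Rd o e Fbar loc dloc x L q P RU RD F U) /\
  bilevel_value C Cu Cd Pbar Ru Rd o e Fbar loc dloc x L =
    milp_value C Cu Cd Pbar Ru Rd o e Fbar loc dloc x L /\
  (forall q P RU RD F,
     bilevel_optimal C Cu Cd Pbar Ru Rd o e Fbar loc dloc x L q P RU RD F <->
     exists U, milp_optimal C Cu Cd Pbar Ru Rd o e Fbar loc dloc x L q P RU RD F U).
Proof.
move=> increasing_cost Pbar_ge0 _ _ _; split.
  exact: bilevel_milp_feasible_iff.
split; first exact: bilevel_milp_value_eq.
exact: bilevel_milp_optimal_iff.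
Qed.
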